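(* Let $\mathfrak{G}_{\Sigma_{1,0}}$ be the Goldman Lie algebra of the closed torus, taken over $\mathbb{Q}$. Then $\mathfrak{G}_{\Sigma_{1,0}}$ is finitely generated as a Lie algebra over $\mathbb{Q}$.
   Context: Let $\Sigma_{1,0}=T^2$ be the closed oriented torus, and let $\hat\pi$ be the set of free homotopy classes of loops on it. Since $\pi_1(T^2)\cong\mathbb{Z}^2$ is abelian, $\hat\pi$ is identified with $\mathbb{Z}^2$; writing $a,b$ for the two standard generators, every element of $\hat\pi$ is written $a^ib^j$ with $(i,j)\in\mathbb{Z}^2$, and $1=a^0b^0$ denotes the class of the contractible loop. The Goldman bracket of two classes $\alpha,\beta$ (represented by loops meeting in transverse double points) is $[\alpha,\beta]=\sum_{p\in\alpha\cap\beta}\epsilon(p)\,\alpha*_p\beta$, where $\epsilon(p)=\pm1$ is the sign of the intersection at $p$ with respect to the orientation and $\alpha*_p\beta$ is the loop obtained by traversing $\alpha$ from $p$ and then $\beta$ from $p$; it is extended bilinearly. On the torus this gives $[a^ib^j,a^kb^l]=(il-jk)\,a^{i+k}b^{j+l}$. The Goldman Lie algebra $\mathfrak{G}_{\Sigma_{1,0}}$ over $\mathbb{Q}$ is the $\mathbb{Q}$-vector space with basis $\hat\pi$ equipped with this bracket. *)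

From HB Require Import structures.
From mathcomp Require Import all_boot all_order all_algebra.
From mathcomp Require Import finmap.
From mathcomp.multinomials Require Import monalg.
Set Implicit Arguments. Unset Strict Implicit. Unset Printing Implicit Defensive.
Import Order.TTheory GRing.Theory Num.Theory.
Local Open Scope ring_scope.

(* pi-hat(T^2) = Z^2 : the class a^i b^j is the pair (i, j). *)
Definition loopclass := (int * int)%type.

Definition goldman := {malg rat[loopclass]}.

Definition gbasis (p : loopclass) : goldman := << p >>.

Definition gdet (p q : loopclass) : int := p.1 * q.2 - p.2 * q.1.

(* bilinear extension of [a^i b^j, a^k b^l] = (il - jk) a^(i+k) b^(j+l) *)
Definition gbracket (x y : goldman) : goldman :=
  \sum_(p <- msupp x) \sum_(q <- msupp y)
     << (x@_p * y@_q * (gdet p q)%:~R) *g (p.1 + q.1, p.2 + q.2) >>.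

Inductive lie_gen (S : seq goldman) : goldman -> Prop :=
| lie_gen_in x : x \in S -> lie_gen S x
| lie_gen_0 : lie_gen S 0
| lie_gen_add x y : lie_gen S x -> lie_gen S y -> lie_gen S (x + y)
| lie_gen_scale (c : rat) x : lie_gen S x -> lie_gen S (c *: x)
| lie_gen_br x y : lie_gen S x -> lie_gen S y -> lie_gen S (gbracket x y).

Definition finitely_generated_goldman : Prop :=
  exists S : seq goldman, forall x : goldman, lie_gen S x.

(* Bracketing a basis vector a^i b^j with a^(+-1) gives +-j a^(i+-1) b^j, and with b^(+-1) gives
   -+i a^i b^(j+-1).  Since we are over Q these scalars can be divided out as soon as they are
   nonzero, so from b the five classes 1, a^(+-1), b^(+-1) reach every class: first the row
   j = 1, then every column i <> 0, and finally the column i = 0 away from the origin. *)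

From mathcomp Require Import all_boot all_algebra.
From mathcomp Require Import finmap.
From mathcomp.multinomials Require Import monalg.
From mathcomp Require Import ring.
Set Implicit Arguments. Unset Strict Implicit. Unset Printing Implicit Defensive.
Import GRing.Theory.
Local Open Scope ring_scope.

Lemma gbasisZ (c : rat) (p : loopclass) : c *: gbasis p = << c *g p >>.
Proof. by apply/malgP => q; rewrite mcoeffZ !mcoeffU mulr_natr. Qed.

Lemma gbracket_gbasis p q :
  gbracket (gbasis p) (gbasis q) = (gdet p q)%:~R *: gbasis (p.1 + q.1, p.2 + q.2).
Proof.
by rewrite /gbracket /gbasis !msuppU oner_eq0 !big_seq_fset1 !mcoeffUU !mul1r gbasisZ.
Qed.

Lemma gdet_translate p d (n : int) : gdet d (p.1 + n * d.1, p.2 + n * d.2) = gdet d p.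
Proof. rewrite /gdet /=; ring. Qed.

Lemma gdetNl d q : gdet (- d.1, - d.2) q = - gdet d q.
Proof. rewrite /gdet /=; ring. Qed.

Lemma lie_gen_sum S (I : Type) (r : seq I) (F : I -> goldman) :
  (forall i, lie_gen S (F i)) -> lie_gen S (\sum_(i <- r) F i).
Proof.
move=> SF; elim/big_rec: _ => [|i x _ Sx]; [exact: lie_gen_0 | exact: lie_gen_add].
Qed.

Lemma lie_gen_all_of_gbasis S : (forall p, lie_gen S (gbasis p)) -> forall x, lie_gen S x.
Proof.
move=> Sbasis x; rewrite (monalgE x); apply: lie_gen_sum => p.
by rewrite -gbasisZ; apply/lie_gen_scale/Sbasis.
Qed.

Lemma lie_gen_gbasisD S p q : gdet p q != 0 ->
  lie_gen S (gbasis p) -> lie_gen S (gbasis q) -> lie_gen S (gbasis (p.1 + q.1, p.2 + q.2)).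
Proof.
move=> det_pq Sp Sq; have := lie_gen_scale (gdet p q)%:~R^-1 (lie_gen_br Sp Sq).
by rewrite gbracket_gbasis scalerA mulVf ?scale1r ?intr_eq0.
Qed.

Lemma int_ind_succ_pred (P : int -> Prop) :
  P 0 -> (forall n, P n -> P (n + 1)) -> (forall n, P n -> P (n - 1)) -> forall n, P n.
Proof.
move=> P0 PS PP; elim/int_rect => [//|n|n]; first by rewrite intS addrC; exact: PS.
by rewrite intS opprD addrC; exact: PP.
Qed.

Lemma lie_gen_line S d p :
    lie_gen S (gbasis d) -> lie_gen S (gbasis (- d.1, - d.2)) -> gdet d p != 0 ->
    lie_gen S (gbasis p) -> forall n, lie_gen S (gbasis (p.1 + n * d.1, p.2 + n * d.2)).
Proof.
move=> Sd Sdm det_dp Sp.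
have det_n n : gdet d (p.1 + n * d.1, p.2 + n * d.2) != 0 by rewrite gdet_translate.
elim/int_ind_succ_pred => [|n Sn|n Sn].
- by rewrite !mul0r !addr0 -surjective_pairing.
- have := lie_gen_gbasisD (det_n n) Sd Sn.
  by congr (lie_gen S (gbasis (_, _))); rewrite /=; ring.
- have det_mn : gdet (- d.1, - d.2) (p.1 + n * d.1, p.2 + n * d.2) != 0.
    by rewrite gdetNl oppr_eq0.
  have := lie_gen_gbasisD det_mn Sdm Sn.
  by congr (lie_gen S (gbasis (_, _))); rewrite /=; ring.
Qed.

(* The class 1 = (0, 0) must be a generator: it is central, and p + q = 0 forces gdet p q = 0. *)
Definition generator_classes : seq loopclass := [:: (0, 0); (1, 0); (-1, 0); (0, 1); (0, -1)].

Definition generators : seq goldman := map gbasis generator_classes.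

Lemma lie_gen_generator p : p \in generator_classes -> lie_gen generators (gbasis p).
Proof. by move=> gen_p; apply/lie_gen_in/map_f. Qed.

Lemma lie_gen_row (j : int) : j != 0 ->
  forall i0, lie_gen generators (gbasis (i0, j)) -> forall i, lie_gen generators (gbasis (i, j)).
Proof.
move=> nz_j i0 Si0 i.
have det_a : gdet (1, 0) (i0, j) != 0 by rewrite /gdet /= mul1r mul0r subr0.
have := lie_gen_line (@lie_gen_generator (1, 0) isT) (@lie_gen_generator (- 1, - 0) isT)
  det_a Si0 (i - i0).
by congr (lie_gen _ (gbasis (_, _))); rewrite /=; ring.
Qed.

Lemma lie_gen_column (i : int) : i != 0 ->
  forall j0, lie_gen generators (gbasis (i, j0)) -> forall j, lie_gen generators (gbasis (i, j)).
Proof.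
move=> nz_i j0 Sj0 j.
have det_b : gdet (0, 1) (i, j0) != 0 by rewrite /gdet /= mul0r sub0r mul1r oppr_eq0.
have := lie_gen_line (@lie_gen_generator (0, 1) isT) (@lie_gen_generator (- 0, - 1) isT)
  det_b Sj0 (j - j0).
by congr (lie_gen _ (gbasis (_, _))); rewrite /=; ring.
Qed.

Lemma lie_gen_gbasis p : lie_gen generators (gbasis p).
Proof.
have S_b : lie_gen generators (gbasis (0, 1)) by exact: lie_gen_generator.
have S_nz_i i j : i != 0 -> lie_gen generators (gbasis (i, j)).
  by move=> nz_i; apply: lie_gen_column nz_i 1 _ j; exact: (@lie_gen_row 1 isT 0 S_b).
case: p => i j; have [-> | /S_nz_i //] := eqVneq i 0.
have [-> | nz_j] := eqVneq j 0; first exact: lie_gen_generator.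
by apply: lie_gen_row nz_j 1 _ 0; apply: S_nz_i.
Qed.

Theorem mainTheorem1 :
  exists S : seq goldman, forall x : goldman, lie_gen S x.
Proof. by exists generators; apply: lie_gen_all_of_gbasis; apply: lie_gen_gbasis. Qed.
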